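(* Let $(\mathcal V,\mathcal W,\lambda)$ be a FTvN system with center $C$. Then $C=\{u\in\mathcal V:[u]=\{u\}\}$.
   Context: A Fan-Theobald-von Neumann (FTvN) system is a triple $(\mathcal V,\mathcal W,\lambda)$ where $\mathcal V,\mathcal W$ are real inner product spaces and $\lambda:\mathcal V\to\mathcal W$ is a map such that: (A1) $\|\lambda(x)\|=\|x\|$ for all $x$; (A2) $\langle x,y\rangle\le\langle\lambda(x),\lambda(y)\rangle$ for all $x,y$; (A3) for every $c\in\mathcal V$ and $q\in\lambda(\mathcal V)$ there exists $x$ with $\lambda(x)=q$ and $\langle c,x\rangle=\langle\lambda(c),\lambda(x)\rangle$. The $\lambda$-orbit of $u$ is $[u]=\{x:\lambda(x)=\lambda(u)\}$. Elements $x,y$ commute if $\langle x,y\rangle=\langle\lambda(x),\lambda(y)\rangle$. The center $C$ is the set of elements of $\mathcal V$ commuting with every element of $\mathcal V$. *)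

From HB Require Import structures.
From mathcomp Require Import all_boot all_order all_algebra.
From mathcomp Require Import reals.
Set Implicit Arguments. Unset Strict Implicit. Unset Printing Implicit Defensive.
Import Order.TTheory GRing.Theory Num.Theory.
Local Open Scope ring_scope.

Record inner_product (R : realType) (V : lmodType R) := InnerProduct {
  ip :> V -> V -> R;
  ip_sym : forall x y, ip x y = ip y x;
  ip_linear : forall (a : R) x y z, ip (a *: x + y) z = a * ip x z + ip y z;
  ip_pos : forall x, x != 0 -> 0 < ip x x
}.

Definition ipnorm (R : realType) (V : lmodType R) (ipV : inner_product V) (x : V) : R :=
  Num.sqrt (ipV x x).

Definition FTvN_system (R : realType) (V W : lmodType R)
  (ipV : inner_product V) (ipW : inner_product W) (lam : V -> W) : Prop :=
  [/\ (forall x, ipnorm ipW (lam x) = ipnorm ipV x),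
      (forall x y, ipV x y <= ipW (lam x) (lam y)) &
      (forall (c : V) (q : W), (exists u, lam u = q) ->
         exists x, lam x = q /\ ipV c x = ipW (lam c) (lam x))].

(* lambda-orbit [u] = { x | lam x = lam u } *)
Definition lam_orbit (R : realType) (V W : lmodType R) (lam : V -> W) (u : V) : V -> Prop :=
  fun x => lam x = lam u.

Definition commute_ftvn (R : realType) (V W : lmodType R)
  (ipV : inner_product V) (ipW : inner_product W) (lam : V -> W) (x y : V) : Prop :=
  ipV x y = ipW (lam x) (lam y).

Definition center (R : realType) (V W : lmodType R)
  (ipV : inner_product V) (ipW : inner_product W) (lam : V -> W) : V -> Prop :=
  fun u => forall y, commute_ftvn ipV ipW lam u y.

From mathcomp Require Import all_boot all_order all_algebra.
From mathcomp Require Import reals.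

Set Implicit Arguments.
Unset Strict Implicit.
Unset Printing Implicit Defensive.
Import Order.TTheory GRing.Theory Num.Theory.
Local Open Scope ring_scope.

(* Since lambda preserves norms, an orbit [u] lies on the sphere of radius
   ||u||.  If u is central, every x in [u] satisfies <u,x> = <lam u, lam x>
   = ||u||^2, so ||x - u||^2 = 0.  Conversely, axiom (A3) puts in [u] an
   element commuting with any given y; if [u] = {u}, that element is u. *)

Section InnerProduct.
Variables (R : realType) (V : lmodType R) (ipV : inner_product V).

Lemma ipDl x y z : ipV (x + y) z = ipV x z + ipV y z.
Proof. by have := ip_linear ipV 1 x y z; rewrite scale1r mul1r. Qed.

Lemma ip0l z : ipV 0 z = 0.
Proof. by apply: (@addrI _ (ipV 0 z)); rewrite -ipDl !addr0. Qed.

Lemma ipNl x z : ipV (- x) z = - ipV x z.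
Proof.
by have := ip_linear ipV (-1) x 0 z; rewrite addr0 ip0l addr0 scaleN1r mulN1r.
Qed.

Lemma ipBl x y z : ipV (x - y) z = ipV x z - ipV y z.
Proof. by rewrite ipDl ipNl. Qed.

Lemma ipBr x y z : ipV z (x - y) = ipV z x - ipV z y.
Proof. by rewrite ip_sym ipBl !(ip_sym ipV z). Qed.

Lemma ip_ge0 x : 0 <= ipV x x.
Proof. by have [->|/(ip_pos ipV)/ltW] := eqVneq x 0; rewrite ?ip0l. Qed.

Lemma ip_eq0 x : ipV x x = 0 -> x = 0.
Proof. by have [//|/(ip_pos ipV)/[swap]->] := eqVneq x 0; rewrite ltxx. Qed.

Lemma ip_diag_eq x u : ipV x x = ipV u u -> ipV x u = ipV u u -> x = u.
Proof.
move=> xx xu; apply/eqP; rewrite -subr_eq0; apply/eqP/ip_eq0.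
by rewrite ipBl !ipBr xx xu (ip_sym ipV u x) xu !subrr.
Qed.

End InnerProduct.

Section FTvN.
Variables (R : realType) (V W : lmodType R).
Variables (ipV : inner_product V) (ipW : inner_product W) (lam : V -> W).
Hypothesis ftvn : FTvN_system ipV ipW lam.

Lemma ip_lam_diag x : ipW (lam x) (lam x) = ipV x x.
Proof.
case: ftvn => norm_lam _ _; apply/eqP.
by rewrite -eqr_sqrt ?ip_ge0 //; apply/eqP/norm_lam.
Qed.

Lemma center_lam_orbit_eq u x : center ipV ipW lam u -> lam x = lam u -> x = u.
Proof.
move=> Cu xu; apply: (@ip_diag_eq _ _ ipV).
  by rewrite -!ip_lam_diag xu.
by rewrite ip_sym Cu /commute_ftvn xu ip_lam_diag.
Qed.

Lemma exists_lam_orbit_commute u y :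
  exists2 x, lam x = lam u & commute_ftvn ipV ipW lam x y.
Proof.
case: ftvn => _ _ /(_ y (lam u)) [|x [xu yx]]; first by exists u.
by exists x; rewrite // /commute_ftvn ip_sym yx ip_sym.
Qed.

End FTvN.

Theorem proposition6p3 (R : realType) (V W : lmodType R)
  (ipV : inner_product V) (ipW : inner_product W) (lam : V -> W) :
  FTvN_system ipV ipW lam ->
  forall u : V, center ipV ipW lam u <-> (forall x : V, lam_orbit lam u x <-> x = u).
Proof.
move=> ftvn u; split=> [Cu x | orbit1 y].
  by split=> [|->]; [exact: center_lam_orbit_eq Cu | rewrite /lam_orbit].
by have [x /orbit1 <-] := exists_lam_orbit_commute ftvn u y.
Qed.
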